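(* Consider the downlink MISO-NOMA beamforming setting described in the context, assume the problem is feasible, and let $P_g$ be the green power. If $P_{ava}\le P_g$, then the weighted-sum problem $$\max_{\{\mathbf{w}_i\}_{i=1}^K\in\mathcal{F}} \;(1-\alpha)\frac{f_1(\{\mathbf{w}_i\}_{i=1}^K)}{f_1^*}+\alpha\frac{f_2(\{\mathbf{w}_i\}_{i=1}^K)}{f_2^*}$$ provides the same solution for all weights $\alpha\in[0,1]$, i.e., the normalized spectral efficiency $f_1/f_1^*$ and normalized energy efficiency $f_2/f_2^*$ attained at its optimal solution do not depend on $\alpha$.
   Context: A base station with $N$ antennas serves $K$ single-antenna users, $\mathcal{K}=\{1,\dots,K\}$. User $i$ has channel vector $\mathbf{h}_i\in\mathbb{C}^N$ and noise variance $\sigma_i^2>0$; users are ordered so that $\|\mathbf{h}_K\|^2\le\cdots\le\|\mathbf{h}_1\|^2$. Beamforming vectors are $\mathbf{w}_1,\dots,\mathbf{w}_K\in\mathbb{C}^N$. For $i\in\mathcal{K}$, $k\le i$: $R_k^{(i)}=\log_2\!\Big(1+\frac{|\mathbf{h}_k^H\mathbf{w}_i|^2}{\sum_{j=1}^{i-1}|\mathbf{h}_k^H\mathbf{w}_j|^2+\sigma_k^2}\Big)$, $R_i=\min_{1\le k\le i}R_k^{(i)}$. Spectral efficiency $f_1=\sum_{i=1}^K R_i$; global energy efficiency $f_2=\frac{\sum_{i=1}^K R_i}{\frac{1}{\epsilon_0}\sum_{i=1}^K\|\mathbf{w}_i\|_2^2+P_l}$ with $\epsilon_0\in(0,1]$,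 $P_l>0$. For available power $P_{ava}$ and rate thresholds $R_i^{th}\ge0$, the feasible set $\mathcal{F}$ is defined by (i) $\sum_i\|\mathbf{w}_i\|_2^2\le P_{ava}$, (ii) $R_i\ge R_i^{th}$ for all $i$, (iii) $|\mathbf{h}_i^H\mathbf{w}_K|^2\ge\cdots\ge|\mathbf{h}_i^H\mathbf{w}_1|^2$ for all $i$. $f_1^*$ is the maximum of $f_1$ subject to (i) and (iii); $f_2^*$ is the maximum of $f_2$ over $\mathcal{F}$ (both depend on $P_{ava}$). The green power $P_g$ is the available power level at which the maximum global energy efficiency (the optimal value of maximizing $f_2$ over $\mathcal{F}$, viewed as a function of $P_{ava}$) is reached, beyond which increasing $P_{ava}$ yields no further increase in either the maximal energy efficiency or the corresponding sum rate. *)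

From HB Require Import structures.
From mathcomp Require Import all_boot all_order all_algebra.
From mathcomp Require Import all_classical all_reals.
From mathcomp Require Import exp.
From mathcomp Require Import complex.
Set Implicit Arguments. Unset Strict Implicit. Unset Printing Implicit Defensive.
Import Order.TTheory GRing.Theory Num.Theory.
Local Open Scope ring_scope.
Local Open Scope classical_set_scope.

Section NOMA.
Variable R : realType.

Definition cabs2 (z : R[i]) : R := (complex.Re z) ^+ 2 + (complex.Im z) ^+ 2.

Definition hdot (N : nat) (h w : 'cV[R[i]]_N) : R[i] :=
  \sum_(n < N) conjc (h n ord0) * w n ord0.

Definition sqnorm (N : nat) (w : 'cV[R[i]]_N) : R := \sum_(n < N) cabs2 (w n ord0).

Definition log2 (x : R) : R := ln x / ln 2.

Variables (N K : nat).
Variables (h : 'I_K -> 'cV[R[i]]_N) (sigma2 : 'I_K -> R).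

(* R_k^{(i)} : rate of decoding user i's signal at user k (k <= i) *)
Definition Rki (w : 'I_K -> 'cV[R[i]]_N) (i k : 'I_K) : R :=
  log2 (1 + cabs2 (hdot (h k) (w i)) /
            (\sum_(j < K | (j < i)%N) cabs2 (hdot (h k) (w j)) + sigma2 k)).

Definition rate (w : 'I_K -> 'cV[R[i]]_N) (i : 'I_K) : R :=
  \big[Order.min/Rki w i i]_(k < K | (k <= i)%N) Rki w i k.

Definition f1 (w : 'I_K -> 'cV[R[i]]_N) : R := \sum_(i < K) rate w i.

Definition tpower (w : 'I_K -> 'cV[R[i]]_N) : R := \sum_(i < K) sqnorm (w i).

Definition f2 (eps0 Pl : R) (w : 'I_K -> 'cV[R[i]]_N) : R :=
  f1 w / (eps0^-1 * tpower w + Pl).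

Definition power_ok (Pava : R) (w : 'I_K -> 'cV[R[i]]_N) : Prop := tpower w <= Pava.

Definition qos_ok (Rth : 'I_K -> R) (w : 'I_K -> 'cV[R[i]]_N) : Prop :=
  forall i, Rth i <= rate w i.

Definition sic_ok (w : 'I_K -> 'cV[R[i]]_N) : Prop :=
  forall i j j' : 'I_K, (j <= j')%N -> cabs2 (hdot (h i) (w j)) <= cabs2 (hdot (h i) (w j')).

Definition feasible (Rth : 'I_K -> R) (Pava : R) : set ('I_K -> 'cV[R[i]]_N) :=
  [set w | power_ok Pava w /\ qos_ok Rth w /\ sic_ok w].

Definition f1star (Pava : R) : R :=
  sup [set f1 w | w in [set w | power_ok Pava w /\ sic_ok w]].

Definition f2star (eps0 Pl : R) (Rth : 'I_K -> R) (Pava : R) : R :=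
  sup [set f2 eps0 Pl w | w in feasible Rth Pava].

Definition sumrate_at_maxEE (eps0 Pl : R) (Rth : 'I_K -> R) (Pava : R) : R :=
  sup [set f1 w | w in [set w | feasible Rth Pava w /\
                                f2 eps0 Pl w = f2star eps0 Pl Rth Pava]].

Definition green_power (eps0 Pl : R) (Rth : 'I_K -> R) (Pg : R) : Prop :=
  0 <= Pg /\
  (forall P P' : R, 0 <= P -> P < P' -> P' <= Pg ->
     feasible Rth P !=set0 ->
     f2star eps0 Pl Rth P < f2star eps0 Pl Rth P') /\
  (forall P : R, Pg <= P ->
     f2star eps0 Pl Rth P = f2star eps0 Pl Rth Pg /\
     sumrate_at_maxEE eps0 Pl Rth P = sumrate_at_maxEE eps0 Pl Rth Pg).

Definition wobj (eps0 Pl : R) (Rth : 'I_K -> R) (Pava alpha : R)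
  (w : 'I_K -> 'cV[R[i]]_N) : R :=
  (1 - alpha) * (f1 w / f1star Pava) + alpha * (f2 eps0 Pl w / f2star eps0 Pl Rth Pava).

Definition wopt (eps0 Pl : R) (Rth : 'I_K -> R) (Pava alpha : R)
  (w : 'I_K -> 'cV[R[i]]_N) : Prop :=
  feasible Rth Pava w /\
  forall v, feasible Rth Pava v ->
    wobj eps0 Pl Rth Pava alpha v <= wobj eps0 Pl Rth Pava alpha w.

End NOMA.

From HB Require Import structures.
From mathcomp Require Import all_boot all_order all_algebra.
From mathcomp Require Import all_classical all_reals.
From mathcomp Require Import exp.
From mathcomp Require Import complex.
From mathcomp Require Import ring lra.
Import Order.TTheory GRing.Theory Num.Theory.
Local Open Scope ring_scope.
Local Open Scope classical_set_scope.

(* Write M for the largest sum rate over the feasible set, B for the maximal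
   energy efficiency and D = P_ava / eps0 + P_l for the power consumed at full
   budget.  Every feasible beamformer has f1 = f2 * D(power) <= B * D, so
   M <= B * D.  Conversely, below the green power the maximal energy efficiency
   still increases strictly with the budget, so beamformers whose energy
   efficiency is close to B must use almost the whole budget; their sum rate is
   then close to B * D, whence B * D = M.  Consequently f1 / M <= f2 / B on the
   feasible set, an energy-efficient beamformer is also sum-rate optimal and
   vice versa, and a maximiser of the weighted objective, whatever the weight,
   attains both f1 = M and f2 = B. *)

Section ComplexBounds.
Context {R : realType}.

Lemma cabs2_ge0 (z : R[i]) : 0 <= cabs2 z.
Proof. by rewrite addr_ge0 ?sqr_ge0. Qed.

Lemma cabs2D_le (x y : R[i]) : cabs2 (x + y) <= 2 * (cabs2 x + cabs2 y).
Proof.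
case: x => a b; case: y => c d; rewrite /cabs2 /=.
have := sqr_ge0 (a - c); have := sqr_ge0 (b - d); nra.
Qed.

Lemma cabs2_conjM (x y : R[i]) : cabs2 (conjc x * y) = cabs2 x * cabs2 y.
Proof. by case: x => a b; case: y => c d; rewrite /cabs2 /=; ring. Qed.

(* A crude substitute for Cauchy-Schwarz: only the finiteness of the
   suprema below matters, not the constant. *)
Lemma cabs2_sum_le {n} (F : 'I_n -> R[i]) :
  cabs2 (\sum_(j < n) F j) <= 2 ^+ n * \sum_(j < n) cabs2 (F j).
Proof.
elim: n F => [|n IHn] F; first by rewrite !big_ord0 /cabs2 /= expr0n /= addr0 mulr0.
rewrite !big_ord_recr exprSr /=.
have := cabs2D_le (\sum_(j < n) F (widen_ord (leqnSn n) j)) (F ord_max).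
have S_ge0 : 0 <= \sum_(j < n) cabs2 (F (widen_ord (leqnSn n) j)).
  by rewrite sumr_ge0 // => j _; apply: cabs2_ge0.
have pow_ge1 : 1 <= 2 ^+ n :> R by rewrite exprn_ege1 // ler1n.
have := IHn (fun j => F (widen_ord (leqnSn n) j)); have := cabs2_ge0 (F ord_max).
nra.
Qed.

Lemma sqnorm_ge0 {N} (w : 'cV[R[i]]_N) : 0 <= sqnorm w.
Proof. by rewrite sumr_ge0 // => n _; apply: cabs2_ge0. Qed.

Lemma tpower_ge0 {N K} (w : 'I_K -> 'cV[R[i]]_N) : 0 <= tpower w.
Proof. by rewrite sumr_ge0 // => i _; apply: sqnorm_ge0. Qed.

Lemma sqnorm_le_tpower {N K} (w : 'I_K -> 'cV[R[i]]_N) i : sqnorm (w i) <= tpower w.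
Proof. by rewrite /tpower (bigD1 i) //= lerDl sumr_ge0 // => j _; apply: sqnorm_ge0. Qed.

Lemma cabs2_le_sqnorm {N} (w : 'cV[R[i]]_N) n : cabs2 (w n ord0) <= sqnorm w.
Proof. by rewrite /sqnorm (bigD1 n) //= lerDl sumr_ge0 // => m _; apply: cabs2_ge0. Qed.

Lemma hdot_le {N} (a b : 'cV[R[i]]_N) :
  cabs2 (hdot a b) <= 2 ^+ N * (sqnorm a * sqnorm b).
Proof.
rewrite /hdot; apply: le_trans (cabs2_sum_le _) _; rewrite ler_wpM2l ?exprn_ge0 // mulr_suml.
apply: ler_sum => n _; rewrite cabs2_conjM ler_wpM2l ?cabs2_ge0 //.
exact: cabs2_le_sqnorm.
Qed.

End ComplexBounds.

Lemma le_sup_image {R : realType} {T : Type} {A : set T} {f : T -> R} (c : R) {x : T} :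
  (forall y, A y -> f y <= c) -> A x -> f x <= sup [set f y | y in A].
Proof.
move=> le_c Ax; apply: ub_le_sup; last by exists x.
by exists c => _ [y Ay <-]; apply: le_c.
Qed.

Lemma ln2_gt0 {R : realType} : 0 < ln (2 : R).
Proof. by rewrite ln_gt0 // ltr1n. Qed.

Section RateBounds.
Context {R : realType} {N K : nat} (h : 'I_K -> 'cV[R[i]]_N) (sigma2 : 'I_K -> R).
Hypothesis sigma2_gt0 : forall k, 0 < sigma2 k.

Definition snr_slope (i : 'I_K) : R := 2 ^+ N * sqnorm (h i) / (sigma2 i * ln 2).

Lemma snr_slope_ge0 i : 0 <= snr_slope i.
Proof.
by rewrite divr_ge0 ?mulr_ge0 ?exprn_ge0 ?sqnorm_ge0 // ltW // ln2_gt0.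
Qed.

Lemma rate_le_Rki_diag w i : rate h sigma2 w i <= Rki h sigma2 w i i.
Proof. by rewrite /rate; elim/big_rec: _ => // k x _ le_x; rewrite ge_min le_x orbT. Qed.

Lemma Rki_diag_le w i : Rki h sigma2 w i i <= snr_slope i * sqnorm (w i).
Proof.
rewrite /Rki /log2 /snr_slope.
set c := cabs2 _; set s := \sum_(j < K | _) _.
have c_ge0 : 0 <= c by apply: cabs2_ge0.
have s_ge0 : 0 <= s by rewrite sumr_ge0 // => j _; apply: cabs2_ge0.
have le_ln : ln (1 + c / (s + sigma2 i)) <= c / sigma2 i.
  apply: le_trans (le_ln1Dx _) _.
    have : 0 <= c / (s + sigma2 i) by rewrite divr_ge0 // addr_ge0 // ltW.
    by apply: lt_le_trans; rewrite ltrN10.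
  by rewrite ler_wpM2l // lef_pV2 ?posrE ?lerDr ?ltr_wpDl.
rewrite mulrAC invfM mulrA ler_wpM2r ?invr_ge0 ?(ltW ln2_gt0) //.
apply: le_trans le_ln _; rewrite -mulrA mulrCA mulrA ler_wpM2r ?invr_ge0 ?(ltW (sigma2_gt0 i)) //.
by rewrite [leRHS]mulrC -mulrA; apply: hdot_le.
Qed.

Definition rate_slope : R := \sum_(i < K) snr_slope i.

Lemma f1_le_tpower w : f1 h sigma2 w <= rate_slope * tpower w.
Proof.
rewrite /f1 /rate_slope mulr_suml; apply: ler_sum => i _.
apply: le_trans (rate_le_Rki_diag _ _) _; apply: le_trans (Rki_diag_le _ _) _.
by rewrite ler_wpM2l ?snr_slope_ge0 ?sqnorm_le_tpower.
Qed.

Lemma f1_le_power_budget P w : tpower w <= P -> f1 h sigma2 w <= rate_slope * P.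
Proof.
move=> le_P; apply: le_trans (f1_le_tpower w) _.
by rewrite ler_wpM2l // sumr_ge0 // => i _; apply: snr_slope_ge0.
Qed.

Lemma f1_le_f1star P w : power_ok P w -> sic_ok h w -> f1 h sigma2 w <= f1star h sigma2 P.
Proof.
move=> Pw SICw; apply: (le_sup_image (rate_slope * P)) => // v [Pv _].
exact: f1_le_power_budget.
Qed.

End RateBounds.

Lemma affine_le_of_lt (R : realFieldType) (a b c M : R) :
  0 <= a -> (forall x, x < c -> a * x + b <= M) -> a * c + b <= M.
Proof.
move=> a_ge0 le_M; apply/ler_addgt0Pr => e e_gt0.
have a1_gt0 : 0 < a + 1 by rewrite ltr_wpDl.
set d := e / (a + 1).
have d_gt0 : 0 < d by rewrite divr_gt0.
have e_def : e = (a + 1) * d by rewrite /d mulrC divfK // gt_eqF.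
have := le_M (c - d); rewrite gtrBl d_gt0 => /(_ isT).
rewrite e_def; nra.
Qed.

Section Optimality.
Context {R : realType} {N K : nat} (h : 'I_K -> 'cV[R[i]]_N) (sigma2 : 'I_K -> R).
Variables (eps0 Pl : R) (Rth : 'I_K -> R).
Hypotheses (sigma2_gt0 : forall k, 0 < sigma2 k) (eps0_gt0 : 0 < eps0) (Pl_gt0 : 0 < Pl).
Hypothesis Rth_ge0 : forall k, 0 <= Rth k.

Local Notation F := (feasible h sigma2 Rth).
Local Notation se := (f1 h sigma2).
Local Notation ee := (f2 h sigma2 eps0 Pl).
Local Notation ee_max := (f2star h sigma2 eps0 Pl Rth).

Definition consumed_power (P : R) : R := eps0^-1 * P + Pl.

(* Unlike [f1star], which ignores the rate thresholds, this is the largest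
   sum rate over the feasible set itself. *)
Definition f1starF (P : R) : R := sup [set se w | w in F P].

Lemma consumed_power_gt0 {P} : 0 <= P -> 0 < consumed_power P.
Proof. by move=> P_ge0; rewrite ltr_wpDl // mulr_ge0 // invr_ge0 ltW. Qed.

Lemma consumed_power_le {P P'} : P <= P' -> consumed_power P <= consumed_power P'.
Proof. by move=> le_P; rewrite lerD2r ler_wpM2l // invr_ge0 ltW. Qed.

Lemma f2E w : ee w = se w / consumed_power (tpower w).
Proof. by []. Qed.

Lemma f2_consumed_power w : ee w * consumed_power (tpower w) = se w.
Proof. by rewrite f2E divfK // gt_eqF // consumed_power_gt0 // tpower_ge0. Qed.

Lemma feasible_power_ge0 {P w} : F P w -> 0 <= P.
Proof. by case=> Pw _; apply: le_trans (tpower_ge0 w) Pw. Qed.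

Lemma feasible_tpower {P w} : F P w -> F (tpower w) w.
Proof. by case=> _ QOS_SICw; split => //; rewrite /power_ok. Qed.

Lemma f1_ge0 {P w} : F P w -> 0 <= se w.
Proof.
by case=> _ [QOSw _]; rewrite sumr_ge0 // => i _; apply: le_trans (QOSw i).
Qed.

Lemma f2_ge0 {P w} : F P w -> 0 <= ee w.
Proof.
by move=> Fw; rewrite f2E divr_ge0 ?(f1_ge0 Fw) // ltW // consumed_power_gt0 // tpower_ge0.
Qed.

Lemma f1_le_f1starF {P w} : F P w -> se w <= f1starF P.
Proof.
move=> Fw; apply: (le_sup_image (rate_slope h sigma2 * P)) => // v [Pv _].
exact: f1_le_power_budget.
Qed.

Lemma f2_le_f2star {P w} : F P w -> ee w <= ee_max P.
Proof.
move=> Fw; apply: (le_sup_image (rate_slope h sigma2 * P / Pl)) => // v Fv.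
apply: le_trans (_ : se v / Pl <= _); last first.
  rewrite ler_wpM2r ?invr_ge0 ?(ltW Pl_gt0) //.
  by apply: f1_le_power_budget => //; case: Fv.
rewrite f2E ler_wpM2l ?(f1_ge0 Fv) // lef_pV2 ?posrE ?consumed_power_gt0 ?tpower_ge0 //.
by rewrite lerDr mulr_ge0 ?tpower_ge0 // invr_ge0 ltW.
Qed.

Lemma f1_le_f2_consumed_power {P w} : F P w -> se w <= ee w * consumed_power P.
Proof.
move=> Fw; rewrite -f2_consumed_power ler_wpM2l ?(f2_ge0 Fw) ?consumed_power_le //.
by case: Fw.
Qed.

Lemma f1starF_ge0 {P} : F P !=set0 -> 0 <= f1starF P.
Proof. by move=> [w Fw]; apply: le_trans (f1_ge0 Fw) (f1_le_f1starF Fw). Qed.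

Lemma f2star_ge0 {P} : F P !=set0 -> 0 <= ee_max P.
Proof. by move=> [w Fw]; apply: le_trans (f2_ge0 Fw) (f2_le_f2star Fw). Qed.

Lemma f1starF_le_f1star {P} : F P !=set0 -> f1starF P <= f1star h sigma2 P.
Proof.
move=> [w Fw]; apply: ge_sup; first by exists (se w), w.
by move=> _ [v [Pv [_ SICv]] <-]; apply: f1_le_f1star.
Qed.

Lemma f1starF_le_f2star {P} : F P !=set0 -> f1starF P <= ee_max P * consumed_power P.
Proof.
move=> [w Fw]; apply: ge_sup; first by exists (se w), w.
move=> _ [v Fv <-]; apply: le_trans (f1_le_f2_consumed_power Fv) _.
by rewrite ler_wpM2r ?(f2_le_f2star Fv) // ltW // consumed_power_gt0 // (feasible_power_ge0 Fv).
Qed.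

Definition f2star_increasing_at (Pava : R) : Prop :=
  forall P, 0 <= P -> P < Pava -> F P !=set0 -> ee_max P < ee_max Pava.

Lemma green_power_increasing_at Pg Pava :
  green_power h sigma2 eps0 Pl Rth Pg -> Pava <= Pg -> f2star_increasing_at Pava.
Proof. by move=> [_ [incr _]] le_Pg P P_ge0 lt_P; apply: incr. Qed.

Section AtPowerBudget.
Variable Pava : R.
Hypotheses (F_neq0 : F Pava !=set0) (f2star_incr : f2star_increasing_at Pava).

Local Notation M := (f1starF Pava).
Local Notation B := (ee_max Pava).

Lemma Pava_ge0 : 0 <= Pava.
Proof. by case: F_neq0 => w /feasible_power_ge0. Qed.

Lemma exists_f2_gt_tpower_gt r P : r < B -> P < Pava ->
  exists2 u, F Pava u & r < ee u /\ P < tpower u.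
Proof.
move=> lt_rB lt_P; have F_img_neq0 : [set ee u | u in F Pava] !=set0.
  by case: F_neq0 => w Fw; exists (ee w), w.
have [[v Fv] | F_eq0] := pselect (F P !=set0).
  have : Num.max r (ee_max P) < B.
    by rewrite gt_max lt_rB f2star_incr ?(feasible_power_ge0 Fv) //; exists v.
  move=> /(sup_gt F_img_neq0) [_ [u Fu <-]]; rewrite gt_max => /andP[lt_r lt_max].
  exists u => //; split => //; rewrite ltNge; apply/negP => le_P.
  by move: lt_max; rewrite ltNge (@f2_le_f2star P) //; case: Fu.
have [_ [u Fu <-] lt_r] := sup_gt F_img_neq0 lt_rB.
exists u => //; split => //; rewrite ltNge; apply/negP => le_P.
by apply: F_eq0; exists u; case: Fu.
Qed.

Lemma f2star_mul_consumed_power_le P : P < Pava -> B * consumed_power P <= M.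
Proof.
move=> lt_P; have [cP_le0 | cP_gt0] := lerP (consumed_power P) 0.
  by apply: le_trans _ (f1starF_ge0 F_neq0); rewrite mulr_ge0_le0 ?f2star_ge0.
rewrite -ler_pdivlMr // leNgt; apply/negP.
move=> /exists_f2_gt_tpower_gt /(_ lt_P) [u Fu [lt_u lt_tpower]].
suff : M < se u by rewrite ltNge (f1_le_f1starF Fu).
rewrite -f2_consumed_power; apply: lt_le_trans (_ : ee u * consumed_power P <= _).
  by rewrite -ltr_pdivrMr.
by rewrite ler_wpM2l ?(f2_ge0 Fu) ?consumed_power_le ?ltW.
Qed.

Lemma f2star_mul_consumed_power : B * consumed_power Pava = M.
Proof.
apply/le_anti; rewrite f1starF_le_f2star // andbT.
rewrite /consumed_power mulrDr mulrA; apply: affine_le_of_lt => [|P lt_P].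
  by rewrite mulr_ge0 ?f2star_ge0 // invr_ge0 ltW.
by rewrite -mulrA -mulrDr; apply: f2star_mul_consumed_power_le.
Qed.

Lemma tpower_eq_of_f2_eq {u} : F Pava u -> ee u = B -> tpower u = Pava.
Proof.
move=> Fu eq_B; apply/le_anti; rewrite (proj1 Fu) /= leNgt; apply/negP => lt_tpower.
have Fu' := feasible_tpower Fu.
have := f2star_incr _ (tpower_ge0 u) lt_tpower (ex_intro _ u Fu').
by rewrite -eq_B ltNge (f2_le_f2star Fu').
Qed.

Lemma f1_eq_of_f2_eq {u} : F Pava u -> ee u = B -> se u = M.
Proof.
move=> Fu eq_B.
by rewrite -f2_consumed_power eq_B (tpower_eq_of_f2_eq Fu eq_B) f2star_mul_consumed_power.
Qed.

Lemma f2_eq_of_f1_eq {u} : F Pava u -> se u = M -> ee u = B.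
Proof.
move=> Fu eq_M; apply/le_anti; rewrite (f2_le_f2star Fu) /=.
rewrite -(ler_pM2r (consumed_power_gt0 Pava_ge0)) f2star_mul_consumed_power -eq_M.
exact: f1_le_f2_consumed_power.
Qed.

Lemma f1_div_le_f2_div {u} : F Pava u -> se u / M <= ee u / B.
Proof.
move=> Fu; rewrite -f2star_mul_consumed_power invfM mulrCA [leRHS]mulrC.
rewrite ler_wpM2l ?invr_ge0 ?f2star_ge0 // ler_pdivrMr ?consumed_power_gt0 ?Pava_ge0 //.
exact: f1_le_f2_consumed_power.
Qed.

Local Notation obj alpha := (wobj h sigma2 eps0 Pl Rth Pava alpha).
Local Notation opt alpha := (wopt h sigma2 eps0 Pl Rth Pava alpha).

Lemma wopt_f1_eq {alpha u} : 0 <= alpha -> alpha < 1 -> opt alpha u -> se u = M.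
Proof.
move=> alpha_ge0 alpha_lt1 [Fu opt_u]; set A := f1star h sigma2 Pava.
have := f1starF_ge0 F_neq0; rewrite le_eqVlt => /predU1P[M_eq0 | M_gt0].
  by apply/le_anti; rewrite (f1_le_f1starF Fu) -M_eq0 (f1_ge0 Fu).
have A_gt0 : 0 < A := lt_le_trans M_gt0 (f1starF_le_f1star F_neq0).
have B_gt0 : 0 < B.
  by move: M_gt0; rewrite -f2star_mul_consumed_power pmulr_lgt0 // consumed_power_gt0 // Pava_ge0.
set c := (1 - alpha) / A + alpha / M.
have c_gt0 : 0 < c by rewrite ltr_pwDl ?divr_gt0 ?divr_ge0 ?subr_gt0 // ltW.
have le_opt : M * c <= obj alpha u.
  rewrite -ler_pdivlMr //; apply: ge_sup; first by case: F_neq0 => w Fw; exists (se w), w.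
  move=> _ [x Fx <-]; rewrite ler_pdivlMr //; apply: le_trans (opt_u x Fx).
  have -> : se x * c = (1 - alpha) * (se x / A) + alpha * (se x / M) by rewrite /c; ring.
  by rewrite lerD2l ler_wpM2l // f1_div_le_f2_div.
have le_one : obj alpha u <= (1 - alpha) * (se u / A) + alpha.
  rewrite /wobj -[X in _ <= _ + X]mulr1 lerD2l ler_wpM2l // ler_pdivrMr // mul1r.
  exact: f2_le_f2star.
have eq_c : M * c = (1 - alpha) * (M / A) + alpha.
  by rewrite /c; field; rewrite !gt_eqF.
apply/le_anti; rewrite (f1_le_f1starF Fu) /=.
have := le_trans le_opt le_one.
by rewrite eq_c lerD2r ler_pM2l ?subr_gt0 // ler_pM2r ?invr_gt0.
Qed.

Lemma wopt1_f2_eq {u} : opt 1 u -> ee u = B.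
Proof.
move=> [Fu opt_u]; apply/le_anti; rewrite (f2_le_f2star Fu) /=.
have [B_le0 | B_gt0] := lerP B 0; first exact: le_trans B_le0 (f2_ge0 Fu).
apply: ge_sup; first by case: F_neq0 => w Fw; exists (ee w), w.
move=> _ [x Fx <-]; have := opt_u x Fx.
by rewrite /wobj subrr !mul0r !add0r !mul1r ler_pM2r ?invr_gt0.
Qed.

Lemma wopt_optimal alpha u : 0 <= alpha <= 1 -> opt alpha u -> se u = M /\ ee u = B.
Proof.
move=> /andP[alpha_ge0 alpha_le1] opt_u; have Fu := proj1 opt_u.
have [alpha_lt1 | alpha_ge1] := ltP alpha 1.
  have eq_M := wopt_f1_eq alpha_ge0 alpha_lt1 opt_u.
  by split; last exact: f2_eq_of_f1_eq.
have alpha_eq1 : alpha = 1 by apply/le_anti; rewrite alpha_le1 alpha_ge1.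
move: opt_u; rewrite alpha_eq1 => /wopt1_f2_eq eq_B.
by split; first exact: f1_eq_of_f2_eq.
Qed.

End AtPowerBudget.
End Optimality.

Theorem lemma1 (R : realType) (N K : nat)
  (h : 'I_K -> 'cV[R[i]]_N) (sigma2 : 'I_K -> R)
  (eps0 Pl Pava Pg : R) (Rth : 'I_K -> R) :
  (forall k : 'I_K, 0 < sigma2 k) ->
  (forall j k : 'I_K, (j <= k)%N -> sqnorm (h k) <= sqnorm (h j)) ->
  0 < eps0 -> eps0 <= 1 -> 0 < Pl ->
  (forall k : 'I_K, 0 <= Rth k) ->
  feasible h sigma2 Rth Pava !=set0 ->
  green_power h sigma2 eps0 Pl Rth Pg ->
  Pava <= Pg ->
  forall (alpha beta : R) (w v : 'I_K -> 'cV[R[i]]_N),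
    0 <= alpha <= 1 -> 0 <= beta <= 1 ->
    wopt h sigma2 eps0 Pl Rth Pava alpha w ->
    wopt h sigma2 eps0 Pl Rth Pava beta v ->
    f1 h sigma2 w / f1star h sigma2 Pava = f1 h sigma2 v / f1star h sigma2 Pava /\
    f2 h sigma2 eps0 Pl w / f2star h sigma2 eps0 Pl Rth Pava
      = f2 h sigma2 eps0 Pl v / f2star h sigma2 eps0 Pl Rth Pava.
Proof.
move=> sigma2_gt0 _ eps0_gt0 _ Pl_gt0 Rth_ge0 F_neq0 green le_Pg.
move=> alpha beta w v alpha01 beta01 opt_w opt_v.
have incr : f2star_increasing_at h sigma2 eps0 Pl Rth Pava.
  exact: green_power_increasing_at green le_Pg.
have optimal := wopt_optimal _ _ _ _ _ sigma2_gt0 eps0_gt0 Pl_gt0 Rth_ge0 _ F_neq0 incr.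
by have [-> ->] := optimal _ _ alpha01 opt_w; have [-> ->] := optimal _ _ beta01 opt_v.
Qed.
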